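(* Let $K$ be a field and let $n\ge 1$ be an integer. Then the multiplicative monoid $M_n(K)$ of all $n\times n$ matrices with entries in $K$ is sofic.
   Context: For a non-empty finite set $X$, $\mathrm{Map}(X)$ is the monoid of all maps $X\to X$ under composition (identity $\mathrm{Id}_X$) with the Hamming metric $d_X(f,g)=|\{x\in X : f(x)\ne g(x)\}|/|X|$. For a monoid $M$ with identity $1_M$, finite $F\subset M$ and $\varepsilon,\alpha>0$, a map $\varphi\colon M\to\mathrm{Map}(X)$ is an $(F,\varepsilon)$-morphism if $d_X(\varphi(k_1k_2),\varphi(k_1)\varphi(k_2))\le\varepsilon$ for all $k_1,k_2\in F$ and $d_X(\varphi(1_M),\mathrm{Id}_X)\le\varepsilon$; it is $(F,\alpha)$-injective if $d_X(\varphi(k_1),\varphi(k_2))\ge\alpha$ for all distinct $k_1,k_2\in F$. $M$ is sofic if for every finite $F\subset M$ and every $\varepsilon>0$ there exist a non-empty finite set $X$ and an $(F,1-\varepsilon)$-injective $(F,\varepsilon)$-morphism $\varphi\colon M\to\mathrm{Map}(X)$. *)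

From HB Require Import structures.
From mathcomp Require Import all_boot all_order all_algebra.
Set Implicit Arguments. Unset Strict Implicit. Unset Printing Implicit Defensive.
Import Order.TTheory GRing.Theory Num.Theory.
Local Open Scope ring_scope.

Definition hamming (X : finType) (f g : X -> X) : rat :=
  (#|[set x | f x != g x]|)%:R / (#|X|)%:R.

Definition approx_morphism (M : eqType) (mul : M -> M -> M) (one : M)
    (X : finType) (F : seq M) (eps : rat) (phi : M -> X -> X) : Prop :=
  (forall k1 k2, k1 \in F -> k2 \in F ->
     hamming (phi (mul k1 k2)) (fun x => phi k1 (phi k2 x)) <= eps) /\
  hamming (phi one) (fun x => x) <= eps.

Definition approx_injective (M : eqType) (X : finType) (F : seq M)
    (alpha : rat) (phi : M -> X -> X) : Prop :=
  forall k1 k2, k1 \in F -> k2 \in F -> k1 != k2 ->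
    alpha <= hamming (phi k1) (phi k2).

Definition sofic (M : eqType) (mul : M -> M -> M) (one : M) : Prop :=
  forall (F : seq M) (eps : rat), 0 < eps ->
    exists (X : finType) (phi : M -> X -> X),
      (0 < #|X|)%N /\
      approx_morphism mul one F eps phi /\
      approx_injective F (1 - eps) phi.

From HB Require Import structures.
From mathcomp Require Import all_boot all_order all_algebra all_field.
From mathcomp Require Import ring zify.
From Stdlib Require Import Classical ClassicalEpsilon.

(* Every finitely generated subring of a field admits ring maps into finite
   fields keeping any finitely many nonzero elements nonzero: adjoin the
   generators one at a time, sending an algebraic generator to a root of its
   (reduced) minimal polynomial in a finite extension, and a transcendental one
   to a non-root of a suitable nonzero polynomial.  Applied to the entries of a
   finite set F of matrices over K, this gives a map from M_n(K) to the finite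
   monoid M_n(k), k a finite field, that is multiplicative and injective on F.
   A finite monoid T acts exactly on T^N by coordinatewise left multiplication,
   and two distinct a, b act alike only on E^N, where E = {y | a y = b y} is a
   proper subset of T (it misses the unit); for N = |T| M, Bernoulli's
   inequality bounds the fraction of agreement by 1/M. *)

Set Implicit Arguments.
Unset Strict Implicit.
Unset Printing Implicit Defensive.
Import Order.TTheory GRing.Theory Num.Theory.
Local Open Scope ring_scope.

Lemma expn_bernoulli (a N : nat) : (a ^ N * (a + N) <= a * (a + 1) ^ N)%N.
Proof.
elim: N => [|N IH]; first by rewrite !expn0 addn0 muln1 mul1n.
rewrite !expnS; apply: (@leq_trans ((a + 1) * (a ^ N * (a + N)))).
  have : (a * a ^ N <= a ^ N * (a + N))%N by rewrite mulnC leq_mul2l leq_addr orbT.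
  move: (a ^ N)%N => b; nia.
by rewrite [X in (_ <= X)%N]mulnCA leq_mul2l IH orbT.
Qed.

Lemma expn_ltn_mul_le (s t M : nat) : (s < t)%N -> (s ^ (t * M) * M <= t ^ (t * M))%N.
Proof.
move=> lt_st; have t_gt0 : (0 < t)%N by apply: leq_ltn_trans lt_st.
case: (posnP M) => [-> | M_gt0]; first by rewrite muln0.
set N := (t * M)%N.
have le_sN : (s ^ N <= t.-1 ^ N)%N.
  by rewrite leq_exp2r ?muln_gt0 ?t_gt0 // -ltnS prednK.
have := expn_bernoulli t.-1 N; rewrite addn1 prednK // => bern.
have : (t.-1 ^ N * N <= t * t ^ N)%N.
  apply: leq_trans (leq_trans _ bern) (leq_mul (leq_pred t) (leqnn _)).
  by rewrite leq_mul2l leq_addl orbT.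
rewrite /N mulnCA -/N leq_pmul2l // => le_tN.
exact: leq_trans (leq_mul le_sN (leqnn M)) le_tN.
Qed.

Lemma hamming_eqfun (X : finType) (g h : X -> X) : g =1 h -> hamming g h = 0.
Proof.
move=> eq_gh; rewrite /hamming (_ : [set x | _] = set0) ?cards0 ?mul0r //.
by apply/setP => x; rewrite inE eq_gh eqxx in_set0.
Qed.

Section CoordinatewiseAction.
Variables (T : finType) (op : T -> T -> T) (e : T).
Hypotheses (opA : associative op) (op1m : left_id e op) (opm1 : right_id e op).

Definition coord_lmul N (a : T) (x : {ffun 'I_N -> T}) : {ffun 'I_N -> T} :=
  [ffun u => op a (x u)].

Lemma coord_lmulM N a b (x : {ffun 'I_N -> T}) :
  coord_lmul (op a b) x = coord_lmul a (coord_lmul b x).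
Proof. by apply/ffunP => u; rewrite !ffunE opA. Qed.

Lemma coord_lmul1 N (x : {ffun 'I_N -> T}) : coord_lmul e x = x.
Proof. by apply/ffunP => u; rewrite ffunE op1m. Qed.

Definition equalizer (a b : T) := [set y | op a y == op b y].

Lemma card_equalizer_lt a b : a != b -> (#|equalizer a b| < #|T|)%N.
Proof.
move=> neq_ab; rewrite -cardsT; apply: proper_card; rewrite properT.
apply: contra neq_ab => /eqP eqT; move: (in_setT e); by rewrite -eqT inE !opm1.
Qed.

Lemma card_coord_lmul_eq N a b :
  #|[set x : {ffun 'I_N -> T} | coord_lmul a x == coord_lmul b x]| =
  (#|equalizer a b| ^ N)%N.
Proof.
rewrite -[in RHS](card_ord N) -card_ffun_on; apply: eq_card => x; rewrite inE.
apply/eqP/ffun_onP => [eq_ab u | eq_ab].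
  by move/ffunP: eq_ab => /(_ u); rewrite !ffunE inE => ->.
by apply/ffunP => u; rewrite !ffunE; move: (eq_ab u); rewrite inE => /eqP.
Qed.

Lemma hamming_coord_lmul_ge M a b : (0 < M)%N -> a != b ->
  1 - M%:R^-1 <= hamming (@coord_lmul (#|T| * M) a) (coord_lmul b).
Proof.
move=> M_gt0 neq_ab; set N := (#|T| * M)%N.
have T_gt0 : (0 < #|T|)%N by apply/card_gt0P; exists e.
have tN_gt0 : (0 < #|T| ^ N)%N by rewrite expn_gt0 T_gt0.
have card_neq : #|[set x : {ffun 'I_N -> T} | coord_lmul a x != coord_lmul b x]| =
    (#|T| ^ N - #|equalizer a b| ^ N)%N.
  have -> : (#|T| ^ N)%N = #|{: {ffun 'I_N -> T}}| by rewrite card_ffun card_ord.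
  rewrite -card_coord_lmul_eq.
  rewrite -(cardsC [set x : {ffun 'I_N -> T} | coord_lmul a x == coord_lmul b x]) addKn.
  by apply: eq_card => x; rewrite !inE.
have le_sN : (#|equalizer a b| ^ N <= #|T| ^ N)%N.
  by rewrite leq_exp2r ?muln_gt0 ?T_gt0 // ltnW // card_equalizer_lt.
have bound := expn_ltn_mul_le M (card_equalizer_lt neq_ab); rewrite -/N in bound.
rewrite /hamming card_neq card_ffun card_ord natrB // ler_pdivlMr ?ltr0n //.
by rewrite mulrBl mul1r lerD2l lerN2 ler_pdivlMl ?ltr0n // -natrM ler_nat mulnC.
Qed.

Lemma approx_of_fin_model (G : eqType) (mul : G -> G -> G) (one : G)
    (F : seq G) (Phi : G -> T) (eps : rat) :
  0 < eps -> Phi one = e ->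
  {in F &, {morph Phi : g h / mul g h >-> op g h}} ->
  {in F &, injective Phi} ->
  exists (X : finType) (phi : G -> X -> X),
    (0 < #|X|)%N /\ approx_morphism mul one F eps phi /\
    approx_injective F (1 - eps) phi.
Proof.
move=> eps_gt0 Phi1 PhiM Phi_inj.
have [M ltM] : exists M : nat, eps^-1 < M%:R.
  by exists (Num.bound eps^-1); apply: archi_boundP; rewrite invr_ge0 ltW.
have M_gt0 : (0 < M)%N by rewrite -(ltr0n rat); apply: lt_trans ltM; rewrite invr_gt0.
exists {ffun 'I_(#|T| * M) -> T}, (fun g => coord_lmul (Phi g)); split.
  by apply/card_gt0P; exists [ffun=> e].
split; first split.
- move=> g h gF hF; rewrite hamming_eqfun ?ltW // => x.
  by rewrite PhiM // coord_lmulM.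
- by rewrite hamming_eqfun ?ltW // => x; rewrite Phi1 coord_lmul1.
move=> g h gF hF neq_gh; apply: le_trans (hamming_coord_lmul_ge M_gt0 _).
  by rewrite lerD2l lerN2 ltW // -[eps]invrK ltf_pV2 ?posrE ?invr_gt0 ?ltr0n.
by apply: contra neq_gh => /eqP /Phi_inj ->.
Qed.
End CoordinatewiseAction.

Definition ker_le (A : Type) (B C : nmodType) (f : A -> B) (g : A -> C) :=
  forall a, f a = 0 -> g a = 0.

Definition finfield_residual (A : comNzRingType) (K : fieldType)
    (f : {rmorphism A -> K}) :=
  forall cs : seq A, {in cs, forall c, f c != 0} ->
  exists (k : finFieldType) (psi : {rmorphism A -> k}),
    ker_le f psi /\ {in cs, forall c, psi c != 0}.

Lemma intr_eq0_pchar (R : nzRingType) p (z : int) : p \in [pchar R] ->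
  (z%:~R == 0 :> R) = (p %| `|z|)%N.
Proof.
by move=> charRp; case: z => n; rewrite ?NegzE ?mulrNz ?oppr_eq0 /= (dvdn_pcharf charRp).
Qed.

Lemma intr_eq0_pchar0 (R : idomainType) (z : int) : [pchar R] =i pred0 ->
  (z%:~R == 0 :> R) = (z == 0).
Proof.
by move=> /(pcharf0P R) char0; case: z => n; rewrite ?NegzE ?mulrNz ?oppr_eq0 /= char0.
Qed.

Lemma finfield_residual_int (K : fieldType) :
  finfield_residual (intr : {rmorphism int -> K}).
Proof.
move=> cs csK.
have [[p charKp] | nochar] := classic (exists p, p \in [pchar K]).
  have charFp := pchar_Fp (pcharf_prime charKp).
  exists 'F_p, intr; split=> [z /eqP | c /csK]; rewrite /= (intr_eq0_pchar _ charKp).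
    by rewrite -(intr_eq0_pchar _ charFp) => /eqP.
  by rewrite -(intr_eq0_pchar _ charFp).
have char0 : [pchar K] =i pred0 by move=> p; apply/negP => charKp; apply: nochar; exists p.
have [p lt_sum_p p_pr] := prime_above (\sum_(c <- cs) `|c|)%N.
exists 'F_p, intr; split=> [z /eqP | c c_cs]; rewrite /=.
  by rewrite intr_eq0_pchar0 // => /eqP ->; rewrite mulr0z.
rewrite (intr_eq0_pchar _ (pchar_Fp p_pr)); apply/negP => /dvdn_leq.
have := csK c c_cs; rewrite /= intr_eq0_pchar0 // absz_gt0 => -> /(_ isT) le_pc.
have : (`|c| <= \sum_(c <- cs) `|c|)%N by rewrite (big_rem c c_cs) leq_addr.
by move/(leq_trans le_pc); rewrite leqNgt lt_sum_p.
Qed.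

Lemma finField_ext_root (k : finFieldType) (p : {poly k}) : (1 < size p)%N ->
  exists (L : finFieldType) (i : {rmorphism k -> L}) (a : L), root (map_poly i p) a.
Proof.
move=> p_gt1; have p_neq0 : p != 0 by rewrite -size_poly_gt0 ltnW.
have [L [[|r rs] p_split _]] := FinSplittingFieldFor p_neq0.
  move: (eqp_size p_split); rewrite big_nil size_poly1 size_map_poly => p1.
  by rewrite p1 in p_gt1.
exists (FinFieldExtType L), (in_alg (finvect_type L)), r.
by rewrite (eqp_root p_split) root_prod_XsubC mem_head.
Qed.

Lemma finField_ext_nonroot (k : finFieldType) (p : {poly k}) : p != 0 ->
  exists (L : finFieldType) (i : {rmorphism k -> L}) (a : L), (map_poly i p).[a] != 0.
Proof.
move=> p_neq0; have sizeX : size (p * 'X) = (size p).+1 by rewrite size_mulX.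
have : (1 < size (p * 'X - 1)%R)%N.
  by rewrite size_polyDl sizeX ?size_polyN ?size_poly1 ltnS lt0n size_poly_eq0.
case/finField_ext_root => L [i [a /rootP root_a]]; exists L, i, a; apply/eqP => pa0.
move: root_a; rewrite rmorphB rmorphM /= map_polyX rmorph1 hornerD hornerN hornerM.
by rewrite pa0 mul0r sub0r hornerC => /eqP; rewrite oppr_eq0 oner_eq0.
Qed.

Lemma commr_rmorph_comm (A : nzRingType) (L : comNzRingType)
  (g : {rmorphism A -> L}) (a : L) : commr_rmorph g a.
Proof. by move=> b; apply: mulrC. Qed.

Notation horner_at g a := (horner_morph (commr_rmorph_comm g a)).

Section KernelInclusion.
Variables (A B : nzRingType) (f : {rmorphism A -> B}).

Lemma ker_le_map_poly (C : nzRingType) (g : {rmorphism A -> C}) :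
  ker_le f g -> ker_le (map_poly f) (map_poly g).
Proof.
move=> fg p fp0; apply/polyP => i; rewrite coef_map coef0; apply: fg.
by rewrite -coef_map fp0 coef0.
Qed.

Lemma ker_le_comp (C D : nzRingType) (g : {rmorphism A -> C}) (i : {rmorphism C -> D}) :
  ker_le f g -> ker_le f (i \o g).
Proof. by move=> fg a /fg /= ->; rewrite rmorph0. Qed.

Lemma ker_le_horner_at (L : comNzRingType) (h : {rmorphism A -> L}) (a : L) :
  ker_le f h -> ker_le (map_poly f) (horner_at h a).
Proof. by move=> fh p /(ker_le_map_poly fh) hp0; rewrite /horner_morph hp0 horner0. Qed.

Lemma ker_le_map_mx (C : nzRingType) (g : {rmorphism A -> C}) m n (M N : 'M[A]_(m, n)) :
  ker_le f g -> map_mx f M = map_mx f N -> map_mx g M = map_mx g N.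
Proof.
move=> fg /matrixP eq_MN; apply/matrixP => i j; move: (eq_MN i j); rewrite !mxE.
by move/eqP; rewrite -subr_eq0 -rmorphB => /eqP/fg/eqP; rewrite rmorphB subr_eq0 => /eqP.
Qed.
End KernelInclusion.

Lemma ex_minn_prop (P : nat -> Prop) :
  (exists n, P n) -> exists n, P n /\ forall m, P m -> (n <= m)%N.
Proof.
move=> [n Pn]; elim/ltn_ind: n Pn => n IH Pn.
have [[m [Pm lt_mn]] | no_less] := classic (exists m, P m /\ (m < n)%N).
  exact: IH Pm.
by exists n; split=> // m Pm; rewrite leqNgt; apply/negP => lt_mn; apply: no_less; exists m.
Qed.

Lemma size_map_poly_le (A B : nzRingType) (f : {rmorphism A -> B}) (p : {poly A}) :
  (size (map_poly f p) <= size p)%N.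
Proof. by rewrite map_polyE (leq_trans (size_Poly _)) ?size_map. Qed.

Lemma redivp_exists (A : comNzRingType) (h d : {poly A}) : d != 0 ->
  exists k Q r, (lead_coef d ^+ k)%:P * h = Q * d + r /\ (size r < size d)%N.
Proof.
move=> d_neq0; case: (Pdiv.ComRing.redivpP h d) => k Q r eq_h /(_ d_neq0) lt_r.
by exists k, Q, r; rewrite mul_polyC.
Qed.

Section ReducedLift.
Variables (A B : nzRingType) (f : {rmorphism A -> B}).

(* A lift of [map_poly f p] whose leading coefficient survives [f]. *)
Definition reduce_poly (p : {poly A}) := take_poly (size (map_poly f p)) p.

Lemma map_reduce_poly (C : nzRingType) (g : {rmorphism A -> C}) p :
  ker_le f g -> map_poly g (reduce_poly p) = map_poly g p.
Proof.
move=> fg; apply/polyP => i; rewrite !coef_map coef_take_poly.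
case: ltnP => // le_i; rewrite raddf0; apply/esym/fg.
by rewrite -coef_map nth_default.
Qed.

Let map_reduce_poly_id p : map_poly f (reduce_poly p) = map_poly f p.
Proof. exact: map_reduce_poly. Qed.

Lemma size_reduce_poly p : size (reduce_poly p) = size (map_poly f p).
Proof.
apply/eqP; rewrite eqn_leq size_take_poly /=.
by rewrite -{1}map_reduce_poly_id size_map_poly_le.
Qed.

Lemma lead_coef_reduce_poly p : f (lead_coef (reduce_poly p)) = lead_coef (map_poly f p).
Proof.
by rewrite -[in RHS]map_reduce_poly_id !lead_coefE coef_map size_reduce_poly
  map_reduce_poly_id.
Qed.
End ReducedLift.

Section HornerStep.
Variables (A : comNzRingType) (K : fieldType) (f : {rmorphism A -> K}) (x : K).
Hypothesis f_res : finfield_residual f.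
Local Notation fx := (horner_at f x).

Lemma horner_at_neq0 p : fx p != 0 -> map_poly f p != 0.
Proof. by apply: contraNneq => fp0; rewrite /horner_morph fp0 horner0. Qed.

Lemma finfield_residual_horner_transcendental :
  (forall p, fx p = 0 -> map_poly f p = 0) -> finfield_residual fx.
Proof.
move=> transc cs cs_fx.
pose lc (c : {poly A}) := c`_(size (map_poly f c)).-1.
have [k [psi [f_psi psi_lc]]] : exists (k : finFieldType) (psi : {rmorphism A -> k}),
    ker_le f psi /\ {in map lc cs, forall l, psi l != 0}.
  apply: f_res => _ /mapP [c c_cs ->].
  by rewrite -coef_map -lead_coefE lead_coef_eq0 horner_at_neq0 ?cs_fx.
have psi_cs : {in cs, forall c, map_poly psi c != 0}.
  move=> c c_cs; apply: contraNneq (psi_lc _ (map_f lc c_cs)) => psi_c0.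
  by rewrite -coef_map psi_c0 coef0.
have : \prod_(c <- cs) map_poly psi c != 0 by rewrite prodf_seq_neq0; apply/allP.
case/finField_ext_nonroot => L [i [a]]; rewrite rmorph_prod horner_prod prodf_seq_neq0.
move=> /allP cs_a; exists L, (horner_at (i \o psi) a); split=> [p /transc | c c_cs].
  exact/ker_le_horner_at/ker_le_comp.
by move: (cs_a c c_cs) => /=; rewrite /horner_morph -map_poly_comp.
Qed.

Section AlgebraicCase.
Variable g : {poly A}.
Hypotheses (gx : fx g = 0) (g_lead : f (lead_coef g) != 0).
Hypothesis g_min :
  forall h, fx h = 0 -> (size (map_poly f h) < size g)%N -> map_poly f h = 0.

Let size_map_g : size (map_poly f g) = size g.
Proof. exact: size_map_poly_id0. Qed.

Let g_neq0 : g != 0.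
Proof. by apply: contraNneq g_lead => ->; rewrite lead_coef0 rmorph0 eqxx. Qed.

Lemma horner_redivp_rem_neq0 r k Q s :
    fx r != 0 -> f (lead_coef r) != 0 -> (1 < size r < size g)%N ->
    (lead_coef r ^+ k)%:P * g = Q * r + s -> (size s < size r)%N ->
  fx s != 0.
Proof.
move=> fxr r_lead /andP [gt1_r lt_rg] eq_g lt_sr; apply/eqP => fxs0.
have fs0 : map_poly f s = 0.
  by apply: g_min fxs0 _; rewrite (leq_ltn_trans (size_map_poly_le _ _)) ?(ltn_trans lt_sr).
have eq_fg : (f (lead_coef r) ^+ k)%:P * map_poly f g = map_poly f Q * map_poly f r.
  move: (congr1 (map_poly f) eq_g); rewrite !rmorphD !rmorphM !rmorphXn /= fs0 addr0.
  by rewrite map_polyC.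
have fg_neq0 : map_poly f g != 0 by rewrite -size_poly_gt0 size_map_g size_poly_gt0.
have fQ_neq0 : map_poly f Q != 0.
  apply: contra fg_neq0 => /eqP fQ0; move/eqP: eq_fg.
  by rewrite fQ0 mul0r mulf_eq0 polyC_eq0 expf_eq0 (negbTE r_lead) andbF.
have fr_neq0 : map_poly f r != 0.
  by rewrite -size_poly_gt0 (size_map_poly_id0 r_lead) (ltnW gt1_r).
have fxQ : fx Q = 0.
  have := congr1 (fun p => p.[x]) eq_fg; rewrite !hornerM hornerC.
  change (f (lead_coef r) ^+ k * fx g = fx Q * fx r -> fx Q = 0).
  rewrite gx mulr0.
  by move/esym/eqP; rewrite mulf_eq0 (negbTE fxr) orbF => /eqP.
suff : (size (map_poly f Q) < size g)%N by move/(g_min fxQ)/eqP; rewrite (negbTE fQ_neq0).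
have sz_fr := size_map_poly_id0 r_lead.
have := congr1 (fun p : {poly K} => size p) eq_fg.
rewrite size_Cmul ?expf_neq0 // size_map_g size_mul // sz_fr => ->.
by rewrite -subn1 -addnBA ?(ltnW gt1_r) // -[X in (X < _)%N]addn0 ltn_add2l subn_gt0.
Qed.

Lemma redivp_by_g h : exists k Q r,
  (lead_coef g ^+ k)%:P * h = Q * g + r /\ (size (map_poly f r) < size g)%N.
Proof.
have [k [Q [r [eq_h lt_rg]]]] := redivp_exists h g_neq0.
by exists k, Q, r; rewrite (leq_ltn_trans (size_map_poly_le _ _)).
Qed.

(* Modulo the kernel of [f], the ideal generated by [r] and [g] contains a
   constant outside that kernel: the images of [r] and of the minimal
   polynomial of [x] are coprime, witnessed over [A]. *)
Definition bezout_mod (r : {poly A}) :=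
  exists D, f D != 0 /\ exists U V, map_poly f (U * r + V * g - D%:P) = 0.

Lemma bezout_mod_map r r' :
  map_poly f r = map_poly f r' -> bezout_mod r -> bezout_mod r'.
Proof.
move=> eq_rr' [D [fD [U [V eqD]]]]; exists D; split=> //; exists U, V.
by rewrite -eqD !(rmorphB, rmorphD, rmorphM) /= eq_rr'.
Qed.

Lemma bezout_mod_small r :
  fx r != 0 -> (size (map_poly f r) < size g)%N -> bezout_mod r.
Proof.
move eq_n: (size (map_poly f r)) => n; elim/ltn_ind: n r eq_n => n IH r sz_r fxr lt_ng.
have fr_neq0 := horner_at_neq0 fxr.
have [le_n1 | lt_1n] := leqP n 1.
  have fr_const : map_poly f r = (f r`_0)%:P by rewrite [LHS]size1_polyC ?sz_r // coef_map.
  exists r`_0; split; first by apply: contraNneq fr_neq0 => fr0; rewrite fr_const fr0.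
  by exists 1, 0; rewrite mul0r addr0 mul1r rmorphB /= map_polyC fr_const subrr.
set r' := reduce_poly f r; apply: (@bezout_mod_map r').
  exact: map_reduce_poly.
have sz_r' : size r' = n by rewrite size_reduce_poly.
have r'_lead : f (lead_coef r') != 0 by rewrite lead_coef_reduce_poly lead_coef_eq0.
have fxr' : fx r' != 0 by rewrite /horner_morph map_reduce_poly.
have r'_neq0 : r' != 0 by rewrite -size_poly_gt0 sz_r' (ltn_trans _ lt_1n).
have [k [Q [s [eq_g lt_sr]]]] := redivp_exists g r'_neq0.
have fxs : fx s != 0.
  by apply: (horner_redivp_rem_neq0 fxr' r'_lead _ eq_g lt_sr); rewrite sz_r' lt_1n.
have lt_s : (size (map_poly f s) < n)%N.
  by rewrite -sz_r' (leq_ltn_trans (size_map_poly_le _ _)).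
have [D [fD [U [V eqD]]]] := IH _ lt_s s erefl fxs (ltn_trans lt_s lt_ng).
exists D; split=> //; exists (- (U * Q)), (U * (lead_coef r' ^+ k)%:P + V).
have def_s : s = (lead_coef r' ^+ k)%:P * g - Q * r' by rewrite eq_g addrC addKr.
by rewrite -eqD def_s; congr (map_poly f); ring.
Qed.

Lemma bezout_mod_horner_neq0 c : fx c != 0 -> bezout_mod c.
Proof.
move=> fxc; have [k [Q [r [eq_c lt_rg]]]] := redivp_by_g c.
have fxr : fx r != 0.
  have := congr1 fx eq_c; rewrite rmorphD !rmorphM /= gx mulr0 add0r horner_morphC => <-.
  by rewrite mulf_neq0 // rmorphXn expf_neq0.
have [D [fD [U [V eqD]]]] := bezout_mod_small fxr lt_rg.
exists D; split=> //; exists (U * (lead_coef g ^+ k)%:P), (V - U * Q).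
have def_r : r = (lead_coef g ^+ k)%:P * c - Q * g by rewrite eq_c addrC addKr.
by rewrite -eqD def_r; congr (map_poly f); ring.
Qed.

Lemma finfield_residual_horner_algebraic : finfield_residual fx.
Proof.
move=> cs cs_fx.
pose Dof c := epsilon (inhabits 0) (fun D => f D != 0 /\
  exists U V, map_poly f (U * c + V * g - D%:P) = 0).
have DofP c : c \in cs -> f (Dof c) != 0 /\
    exists U V, map_poly f (U * c + V * g - (Dof c)%:P) = 0.
  by move=> c_cs; apply: (epsilon_spec (inhabits 0) _ (bezout_mod_horner_neq0 (cs_fx c c_cs))).
have [k [psi [f_psi psi_D]]] : exists (k : finFieldType) (psi : {rmorphism A -> k}),
    ker_le f psi /\ {in lead_coef g :: map Dof cs, forall D, psi D != 0}.
  apply: f_res => D; rewrite inE => /orP [/eqP -> // | /mapP [c c_cs ->]].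
  exact: (DofP c c_cs).1.
have psi_lead : psi (lead_coef g) != 0 by rewrite psi_D ?mem_head.
have : (1 < size (map_poly psi g))%N.
  rewrite size_map_poly_id0 // -size_map_g (@root_size_gt1 _ x) //; last exact/eqP.
  by rewrite -size_poly_gt0 size_map_g size_poly_gt0.
case/finField_ext_root => L [i [a /rootP root_a]].
have [ev [ev_g ev_f ev_C]] : exists ev : {rmorphism {poly A} -> L},
    [/\ ev g = 0, ker_le (map_poly f) ev & forall b, ev b%:P = i (psi b)].
  exists (horner_at (i \o psi) a); split; last exact: horner_morphC.
    by move: root_a; rewrite -map_poly_comp.
  exact/ker_le_horner_at/ker_le_comp.
have ev_lead : ev (lead_coef g)%:P != 0 by rewrite ev_C fmorph_eq0.
exists L, ev; split=> [h fxh | c c_cs].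
  have [k' [Q [r [eq_h lt_rg]]]] := redivp_by_g h.
  have fxr : fx r = 0.
    by have := congr1 fx eq_h; rewrite rmorphD !rmorphM /= gx fxh !mulr0 add0r.
  have := congr1 ev eq_h; rewrite rmorphD !rmorphM /= ev_g (ev_f _ (g_min fxr lt_rg)).
  rewrite mulr0 addr0.
  by move/eqP; rewrite !rmorphXn mulf_eq0 expf_eq0 (negbTE ev_lead) andbF => /eqP.
have [_ [U [V /ev_f]]] := DofP c c_cs.
rewrite rmorphB rmorphD !rmorphM /= ev_g mulr0 addr0 ev_C => /eqP.
rewrite subr_eq0 => /eqP evc; apply: contra (psi_D (Dof c) _); last by rewrite inE map_f ?orbT.
by move/eqP=> ev_c0; move: evc; rewrite ev_c0 mulr0 => /esym/eqP; rewrite fmorph_eq0.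
Qed.
End AlgebraicCase.

Lemma finfield_residual_horner : finfield_residual fx.
Proof.
have [[h [fh_neq0 fxh]] | transc] :=
  classic (exists h, map_poly f h != 0 /\ fx h = 0); last first.
  apply: finfield_residual_horner_transcendental => p fxp.
  by apply: NNPP => /eqP fp_neq0; apply: transc; exists p.
have [n [[h' [fh'_neq0 fxh' sz_h']] n_min]] := ex_minn_prop
  (P := fun n => exists h, [/\ map_poly f h != 0, fx h = 0 & size (map_poly f h) = n])
  (ex_intro _ _ (ex_intro _ h (And3 fh_neq0 fxh erefl))).
apply: (@finfield_residual_horner_algebraic (reduce_poly f h')).
- by rewrite /horner_morph map_reduce_poly.
- by rewrite lead_coef_reduce_poly lead_coef_eq0.
move=> p fxp; rewrite size_reduce_poly sz_h' => lt_pn; apply: NNPP => /eqP fp_neq0.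
by move: lt_pn; rewrite ltnNge n_min //; exists p.
Qed.
End HornerStep.

Lemma finfield_residual_generated (K : fieldType) (xs : seq K) :
  exists (A : comNzRingType) (f : {rmorphism A -> K}),
    finfield_residual f /\ {in xs, forall y, exists a, f a = y}.
Proof.
elim: xs => [|y xs [A [f [f_res f_xs]]]].
  by exists int, intr; split; [apply: finfield_residual_int | move=> ?].
exists {poly A}, (horner_at f y); split; first exact: finfield_residual_horner.
move=> z; rewrite inE => /orP [/eqP -> | /f_xs [a <-]].
  by exists 'X; rewrite /= horner_morphX.
by exists a%:P; rewrite /= horner_morphC.
Qed.

Definition mx_entries (R : Type) m n (F : seq 'M[R]_(m, n)) : seq R :=
  [seq B ij.1 ij.2 | B : 'M_(m, n) <- F, ij <- enum {: 'I_m * 'I_n}].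

Lemma mem_mx_entries (R : eqType) m n (F : seq 'M[R]_(m, n)) B i j :
  B \in F -> B i j \in mx_entries F.
Proof. by move=> BF; apply/allpairsP; exists (B, (i, j)); rewrite mem_enum. Qed.

Lemma matrix_finfield_model (K : fieldType) n (F : seq 'M[K]_n) :
  exists (k : finFieldType) (Phi : 'M[K]_n -> 'M[k]_n),
    [/\ Phi 1%:M = 1%:M, {in F &, {morph Phi : B C / B *m C}} & {in F &, injective Phi}].
Proof.
have [A [f [f_res f_onto]]] := finfield_residual_generated (mx_entries F).
pose lift (B : 'M[K]_n) : 'M[A]_n := epsilon (inhabits 0) (fun C => map_mx f C = B).
have liftK B : (exists C, map_mx f C = B) -> map_mx f (lift B) = B.
  exact: epsilon_spec.
have liftFK B : B \in F -> map_mx f (lift B) = B.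
  move=> BF; apply: liftK.
  have [C CP] := fin_all_exists (fun ij : 'I_n * 'I_n =>
    f_onto (B ij.1 ij.2) (mem_mx_entries ij.1 ij.2 BF)).
  by exists (\matrix_(i, j) C (i, j)); apply/matrixP => i j; rewrite !mxE CP.
pose E := mx_entries (map lift F).
pose cs := [seq c <- [seq a - b | a <- E, b <- E] | f c != 0].
have [k [psi [f_psi psi_cs]]] : exists (k : finFieldType) (psi : {rmorphism A -> k}),
    ker_le f psi /\ {in cs, forall c, psi c != 0}.
  by apply: f_res => c; rewrite mem_filter => /andP [].
pose Phi B := map_mx psi (lift B).
have PhiE C : Phi (map_mx f C) = map_mx psi C.
  by apply: (ker_le_map_mx f_psi); apply: liftK; exists C.
exists k, Phi; split.
- by rewrite -(map_mx1 f) PhiE map_mx1.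
- by move=> B C BF CF; rewrite -{1}(liftFK B BF) -{1}(liftFK C CF) -map_mxM !PhiE map_mxM.
move=> B C BF CF eq_Phi; apply/matrixP => i j; apply: NNPP => /eqP neq_ij.
pose c := lift B i j - lift C i j.
have fc : f c = B i j - C i j by rewrite rmorphB -{2}(liftFK B BF) -{2}(liftFK C CF) !mxE.
have : c \in cs.
  rewrite mem_filter fc subr_eq0 neq_ij; apply/allpairsP; exists (lift B i j, lift C i j).
  by rewrite !mem_mx_entries ?map_f.
move/psi_cs; rewrite rmorphB subr_eq0; apply/negP/negPn.
by move/matrixP: eq_Phi => /(_ i j); rewrite !mxE => ->.
Qed.

Theorem corollary4p5 (K : fieldType) (n : nat) (hn : (1 <= n)%N) :
  sofic (@mulmx K n n n) (1%:M : 'M[K]_n).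
Proof.
move=> F eps eps_gt0; have [k [Phi [Phi1 PhiM Phi_inj]]] := matrix_finfield_model F.
exact: (approx_of_fin_model (@mulmxA _ n n n n) (@mul1mx _ n n) (@mulmx1 _ n n) eps_gt0
  Phi1 PhiM Phi_inj).
Qed.
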